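(* Let $v_k$ be a joint configuration and suppose the joint configuration graph contains an optimal (minimum-cost collision-free) joint path $\pi_*(v_k,v_F)$ from $v_k$ to the joint goal $v_F$. Then for every subset $\Omega\subset I$ we have $g(\pi'_{\Omega}(v_k,v_F))\le g(\pi_*(v_k,v_F))$. Furthermore, if $\Omega_1\subset\Omega_2\subset I$, then $g(\pi'_{\Omega_1}(v_k,v_F))\le g(\pi'_{\Omega_2}(v_k,v_F))$.
   Context: A set of agents $I=\{1,\dots,n\}$; each agent $i$ moves in a finite graph $G^i=(V^i,E^i)$ with nonnegative edge costs and has goal $v_F^i$. The joint configuration graph is $G=\prod_{i\in I}G^i$, a joint configuration is $v_k=(v_k^i)_{i\in I}$ and $v_F=(v_F^i)_{i\in I}$. The cost $g$ of a joint path (of any subset of agents) is the sum of the costs of the individual agents' paths. Agents may collide according to a fixed collision relation between pairs of agents; a joint path for a set of agents is collision-free if no two agents of that set collide along it. For $\Omega\subseteq I$, $\pi'_\Omega(v_k,v_F)$ denotes the joint path for all of $I$ obtained by letting the agents in $\Omega$ follow a minimum-cost joint path from $v_k^\Omega$ to $v_F^\Omega$ that is collision-free among the agents of $\Omega$ (ignoring the agents outside $\Omega$), and letting each agent $i\notin\Omega$ follow an individually optimal (minimum-cost in $G^i$, ignoring all other agents) path from $v_k^i$ to $v_F^i$. *)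

From mathcomp Require Import all_boot all_order all_algebra.
Set Implicit Arguments. Unset Strict Implicit. Unset Printing Implicit Defensive.
Import Order.TTheory GRing.Theory Num.Theory.
Local Open Scope ring_scope.

(* Agents are 'I_n; agent i moves in the finite graph with vertex type V i,
   edge relation E i and edge cost c i.  coll i j x x' y y' says that agent i
   moving from x to x' and agent j moving from y to y' during the same time
   step collide (the fixed collision relation between pairs of agents). *)
Section MAPF.
Variable R : realFieldType.
Variable n : nat.
Variable V : 'I_n -> finType.
Variable E : forall i, rel (V i).
Variable c : forall i, V i -> V i -> R.
Variable coll : forall i j : 'I_n, V i -> V i -> V j -> V j -> bool.

Definition config := forall i : 'I_n, V i.

(* An individual path of agent i starting at a is given by the sequence s of
   vertices visited after a (so the vertex list is a :: s). *)
Definition jpath := forall i : 'I_n, seq (V i).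

Fixpoint pcost (i : 'I_n) (a : V i) (s : seq (V i)) {struct s} : R :=
  match s with
  | [::] => 0
  | y :: s' => c a y + pcost y s'
  end.

Definition ipath (i : 'I_n) (a b : V i) (s : seq (V i)) : bool :=
  path (@E i) a s && (last a s == b).

(* position of agent i at time t along the path a :: s
   (an agent that has finished its path stays at its last vertex) *)
Definition pos (i : 'I_n) (a : V i) (s : seq (V i)) (t : nat) : V i :=
  nth (last a s) (a :: s) t.

Definition jpath_on (Om : {set 'I_n}) (v w : config) (p : jpath) : Prop :=
  forall i, i \in Om -> ipath (v i) (w i) (p i).

Definition coll_free (Om : {set 'I_n}) (v : config) (p : jpath) : Prop :=
  forall (t : nat) (i j : 'I_n), i \in Om -> j \in Om -> i != j ->
    ~~ coll (pos (v i) (p i) t) (pos (v i) (p i) t.+1)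
            (pos (v j) (p j) t) (pos (v j) (p j) t.+1).

Definition gOm (Om : {set 'I_n}) (v : config) (p : jpath) : R :=
  \sum_(i in Om) pcost (v i) (p i).

Definition g (v : config) (p : jpath) : R := gOm [set: 'I_n] v p.

Definition opt_jpath (Om : {set 'I_n}) (v w : config) (p : jpath) : Prop :=
  [/\ jpath_on Om v w p, coll_free Om v p &
      forall q, jpath_on Om v w q -> coll_free Om v q ->
        gOm Om v p <= gOm Om v q].

Definition opt_ipath (i : 'I_n) (a b : V i) (s : seq (V i)) : Prop :=
  ipath a b s /\ (forall s', ipath a b s' -> pcost a s <= pcost a s').

Definition combine (Om : {set 'I_n}) (P Q : jpath) : jpath :=
  fun i => if i \in Om then P i else Q i.

Definition is_pi' (Om : {set 'I_n}) (v w : config) (pi : jpath) : Prop :=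
  exists P Q : jpath,
    [/\ opt_jpath Om v w P,
        (forall i, i \notin Om -> opt_ipath (v i) (w i) (Q i)) &
        pi = combine Om P Q].

End MAPF.

From mathcomp Require Import all_boot all_order all_algebra.
Set Implicit Arguments. Unset Strict Implicit. Unset Printing Implicit Defensive.
Import Order.TTheory GRing.Theory Num.Theory.
Local Open Scope ring_scope.

(* Split the cost of a joint path into the agents of Om and the rest.  The
   agents of Om in pi'_Om pay the least cost among joint paths that are
   collision-free within Om, the others the least individual cost; any joint
   path of all agents that is collision-free within some superset of Om is
   admissible for both minimisations, so it costs at least g(pi'_Om).  Both
   pi* and pi'_Om2 (for Om2 containing Om) are such paths. *)

Section Relaxation.
Variables (R : realFieldType) (n : nat) (V : 'I_n -> finType).
Variables (E : forall i, rel (V i)) (c : forall i, V i -> V i -> R).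
Variable coll : forall i j : 'I_n, V i -> V i -> V j -> V j -> bool.

Lemma jpath_on_subset (Om1 Om2 : {set 'I_n}) (v w : config V) (p : jpath V) :
  Om1 \subset Om2 -> jpath_on E Om2 v w p -> jpath_on E Om1 v w p.
Proof. by move=> /subsetP sub hp i /sub; apply: hp. Qed.

Lemma coll_free_subset (Om1 Om2 : {set 'I_n}) (v : config V) (p : jpath V) :
  Om1 \subset Om2 -> coll_free coll Om2 v p -> coll_free coll Om1 v p.
Proof. by move=> /subsetP sub hp t i j /sub hi /sub hj; apply: hp. Qed.

Lemma g_split (Om : {set 'I_n}) (v : config V) (p : jpath V) :
  g c v p = gOm c Om v p + gOm c (~: Om) v p.
Proof. by rewrite /g /gOm (big_setID Om) setTI setTD. Qed.

Lemma gOm_combine_in (Om : {set 'I_n}) (v : config V) (P Q : jpath V) :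
  gOm c Om v (combine Om P Q) = gOm c Om v P.
Proof. by apply: eq_bigr => i hi; rewrite /combine hi. Qed.

Lemma gOm_combine_out (Om : {set 'I_n}) (v : config V) (P Q : jpath V) :
  gOm c (~: Om) v (combine Om P Q) = gOm c (~: Om) v Q.
Proof. by apply: eq_bigr => i; rewrite inE /combine => /negbTE ->. Qed.

Lemma pi'_jpath_on (Om : {set 'I_n}) (v w : config V) (pi : jpath V) :
  is_pi' E c coll Om v w pi -> jpath_on E [set: 'I_n] v w pi.
Proof.
case=> P [Q [[hP _ _] hQ ->]] i _; rewrite /combine.
by case: ifPn => hi; [apply: hP | case: (hQ i hi)].
Qed.

Lemma pi'_coll_free (Om : {set 'I_n}) (v w : config V) (pi : jpath V) :
  is_pi' E c coll Om v w pi -> coll_free coll Om v pi.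
Proof.
case=> P [Q [[_ hPc _] _ ->]] t i j hi hj.
by rewrite /combine hi hj; apply: hPc.
Qed.

Lemma pi'_cost_le (Om1 Om2 : {set 'I_n}) (v w : config V) (pi q : jpath V) :
  Om1 \subset Om2 -> is_pi' E c coll Om1 v w pi ->
  jpath_on E [set: 'I_n] v w q -> coll_free coll Om2 v q ->
  g c v pi <= g c v q.
Proof.
move=> sub [P [Q [[_ _ P_min] Q_min ->]]] hq hqc.
rewrite !(g_split Om1) gOm_combine_in gOm_combine_out.
apply: lerD.
  apply: P_min; first exact: jpath_on_subset (subsetT Om1) hq.
  exact: coll_free_subset sub hqc.
apply: ler_sum => i; rewrite inE => hi.
by case: (Q_min i hi) => _; apply; apply: hq; rewrite inE.
Qed.

End Relaxation.

Theorem lemma8 (R : realFieldType) (n : nat) (V : 'I_n -> finType)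
  (E : forall i, rel (V i)) (c : forall i, V i -> V i -> R)
  (coll : forall i j : 'I_n, V i -> V i -> V j -> V j -> bool)
  (c_ge0 : forall i (x y : V i), E i x y -> 0 <= c i x y)
  (vk vF : config V) (pistar : jpath V)
  (hopt : opt_jpath E c coll [set: 'I_n] vk vF pistar) :
  (forall (Om : {set 'I_n}) (pi : jpath V),
     is_pi' E c coll Om vk vF pi -> g c vk pi <= g c vk pistar) /\
  (forall (Om1 Om2 : {set 'I_n}) (pi1 pi2 : jpath V),
     Om1 \subset Om2 ->
     is_pi' E c coll Om1 vk vF pi1 -> is_pi' E c coll Om2 vk vF pi2 ->
     g c vk pi1 <= g c vk pi2).
Proof.
case: hopt => star_path star_free _; split.
  by move=> Om pi hpi; apply: pi'_cost_le (subsetT Om) hpi star_path star_free.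
move=> Om1 Om2 pi1 pi2 sub hpi1 hpi2.
apply: pi'_cost_le sub hpi1 (pi'_jpath_on hpi2) (pi'_coll_free hpi2).
Qed.
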